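(* Let $n\ge d\ge 2$ and let $\mathcal{C}_{n,d}$ be the complete $d$-uniform clutter on $[n]$. Then $\mathcal{C}_{n,d}$ is chordal and its $\lambda$-sequence is \[ \lambda_i(\mathcal{C}_{n,d})=\begin{cases}\binom{n-1-i}{d-2}, & i=1,\ldots,n-d+1,\\ 0, & \text{otherwise.}\end{cases} \]
   Context: $\mathcal{C}_{n,d}$ is the set of all $d$-subsets of $[n]$. For a $d$-uniform clutter $\mathcal{C}$ (set of $d$-subsets of $[n]$): a submaximal circuit is a $(d-1)$-set contained in some circuit; a clique is a set all of whose $d$-subsets are in $\mathcal{C}$; $\mathrm{N}_{\mathcal{C}}(e)=\{c: e\cup\{c\}\in\mathcal{C}\}$, $\mathrm{N}_{\mathcal{C}}[e]=e\cup\mathrm{N}_{\mathcal{C}}(e)$; $e$ is simplicial if it is a submaximal circuit and $\mathrm{N}_{\mathcal{C}}[e]$ is a clique. $\mathcal{C}\setminus e=\{F\in\mathcal{C}:e\not\subset F\}$; $\mathcal{C}_{e_1\cdots e_i}$ is successive deletion. A simplicial order is a sequence $e_1,\ldots,e_r$ with $e_i$ simplicial in $\mathcal{C}_{e_1\cdots e_{i-1}}$ (in $\mathcal{C}$ for $i=1$) and $\mathcal{C}_{e_1\cdots e_r}=\emptyset$; $\mathcal{C}$ is chordal if one exists. Its multiset is $\{N_1,\ldots,N_r\}$, $N_i=|\mathrm{N}_{\mathcal{C}_{e_1\cdots e_{i-1}}}(e_i)|$ (independent of the order), and $\lambda_i(\mathcal{C})=|\{j:N_j=i\}|$. *)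

From mathcomp Require Import all_boot.
Set Implicit Arguments. Unset Strict Implicit. Unset Printing Implicit Defensive.

Section Clutters.
Variable n : nat.
Notation clutter := {set {set 'I_n}}.

Definition complete_clutter (d : nat) : clutter := [set F : {set 'I_n} | #|F| == d].

Definition uniform (d : nat) (C : clutter) : bool := [forall F in C, #|F| == d].

Definition submaximal (d : nat) (C : clutter) (e : {set 'I_n}) : bool :=
  (#|e| == d.-1) && [exists F in C, e \subset F].

Definition clique (d : nat) (C : clutter) (K : {set 'I_n}) : bool :=
  [forall F : {set 'I_n}, ((F \subset K) && (#|F| == d)) ==> (F \in C)].

Definition nbh (C : clutter) (e : {set 'I_n}) : {set 'I_n} :=
  [set c | (c |: e) \in C].
Definition cnbh (C : clutter) (e : {set 'I_n}) : {set 'I_n} := e :|: nbh C e.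

Definition simplicial (d : nat) (C : clutter) (e : {set 'I_n}) : bool :=
  submaximal d C e && clique d C (cnbh C e).

Definition cdel (C : clutter) (e : {set 'I_n}) : clutter :=
  [set F in C | ~~ (e \subset F)].

Definition cdels (C : clutter) (s : seq {set 'I_n}) : clutter := foldl cdel C s.

Definition simplicial_order (d : nat) (C : clutter) (s : seq {set 'I_n}) : Prop :=
  (forall i, i < size s -> simplicial d (cdels C (take i s)) (nth set0 s i))
  /\ cdels C s = set0.

Definition chordal (d : nat) (C : clutter) : Prop := exists s, simplicial_order d C s.

(* N_i of the order s (index i starting at 0) *)
Definition order_N (C : clutter) (s : seq {set 'I_n}) (j : nat) : nat :=
  #|nbh (cdels C (take j s)) (nth set0 s j)|.

Definition lambda_of (C : clutter) (s : seq {set 'I_n}) (i : nat) : nat :=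
  count (fun j => order_N C s j == i) (iota 0 (size s)).

End Clutters.

From mathcomp Require Import all_boot zify.
Set Implicit Arguments. Unset Strict Implicit. Unset Printing Implicit Defensive.

(* For the chordality, list the (d-1)-subsets of [n] with maximum below n - 1
   by increasing maximum.  When e is reached, the surviving d-sets through e are
   e plus an element above max e, so the closed neighbourhood of e is a clique;
   and every d-set F is deleted at latest by F minus its maximum.

   For the lambda-sequence, fix any simplicial order e_1, ..., e_r with
   neighbourhoods N_j.  For k >= 1, (j, S) |-> e_j :|: S, with S a k-subset of
   N_j, is a bijection onto the cliques with d - 1 + k elements, so that
   sum_j 'C(N_j, k) = 'C(n, d - 1 + k).  These binomial moments form a
   unitriangular system determining lambda_i for i >= 1, and the claimed values
   satisfy the same identities by a Vandermonde convolution; finally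
   lambda_0 = 0 because no N_j is empty. *)

Lemma hockey_stick m a : \sum_(i < m.+1) 'C(i, a) = 'C(m.+1, a.+1).
Proof.
elim: m => [|m IHm]; first by rewrite big_ord1; case: a => [|[|a]].
by rewrite big_ord_recr /= IHm [in RHS]binS.
Qed.

Lemma Vandermonde_upper m a b :
  \sum_(i < m.+1) 'C(m - i, b) * 'C(i, a) = 'C(m.+1, a + b + 1).
Proof.
elim: b m => [|b IHb] m.
  rewrite addn0 addn1 -hockey_stick; apply: eq_bigr => i _.
  by rewrite bin0 mul1n.
elim: m => [|m IHm]; first by rewrite big_ord1 bin0n mul0n addn1 addnS.
rewrite big_ord_recr /= subnn bin0n mul0n addn0.
rewrite (eq_bigr (fun i : 'I_m.+1 =>
  'C(m - i, b) * 'C(i, a) + 'C(m - i, b.+1) * 'C(i, a))).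
  by rewrite big_split /= IHb IHm !addn1 !addnS binS addnC.
move=> i _; have lei : i <= m by rewrite -ltnS.
by rewrite subSn // binS mulnDl addnC.
Qed.

Lemma eq_from_binomial_moments (a b : nat -> nat) M :
  (forall i, M < i -> a i = 0 /\ b i = 0) ->
  (forall k, 0 < k ->
     \sum_(i < M.+1) a i * 'C(i, k) = \sum_(i < M.+1) b i * 'C(i, k)) ->
  forall i, 0 < i -> a i = b i.
Proof.
move=> ab0 eq_mom.
suff eq_ab t i : 0 < i -> M < i + t -> a i = b i.
  by move=> i i_gt0; apply: (eq_ab M.+1) => //; rewrite addnS ltnS leq_addl.
elim: t i => [|t IHt] i i_gt0; first by rewrite addn0 => /ab0 [-> ->].
rewrite addnS ltnS leq_eqVlt => /orP [/eqP Mit|]; last exact: IHt.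
have ltiM : i < M.+1 by rewrite ltnS Mit leq_addr.
have := eq_mom i i_gt0.
rewrite (bigD1 (Ordinal ltiM)) //= [RHS](bigD1 (Ordinal ltiM)) //= binn !muln1.
rewrite (eq_bigr (fun j : 'I_M.+1 => b j * 'C(j, i))).
  by move/eqP; rewrite eqn_add2r => /eqP.
move=> j /= neq_ji; case: (ltngtP j i) => [ltji|ltij|eq_ji].
- by rewrite bin_small // !muln0.
- by rewrite IHt ?(ltn_trans _ ltij) //; lia.
- by move: neq_ji; rewrite -val_eqE /= eq_ji eqxx.
Qed.

Lemma exists_subset_card (T : finType) (B : {set T}) k :
  k <= #|B| -> exists2 A : {set T}, A \subset B & #|A| = k.
Proof.
rewrite -bin_gt0 -cards_draws => /card_gt0P [A].
by rewrite inE => /andP [AB /eqP cardA]; exists A.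
Qed.

Lemma mem_cdels n (C : {set {set 'I_n}}) t F :
  (F \in cdels C t) = (F \in C) && all (fun e : {set 'I_n} => ~~ (e \subset F)) t.
Proof.
elim: t C => [|e t IHt] C /=; first by rewrite andbT.
by rewrite IHt inE andbA.
Qed.

Lemma cdels_take_nthP n (C : {set {set 'I_n}}) s j F :
  reflect ((F \in C) /\
           forall j', j' < j -> j' < size s -> ~~ (nth set0 s j' \subset F))
          (F \in cdels C (take j s)).
Proof.
rewrite mem_cdels; apply: (iffP andP) => -[FC avoid]; split=> //.
  move=> j' ltj'j ltj's; move/(all_nthP set0)/(_ j'): avoid.
  by rewrite size_take_min leq_min ltj'j ltj's nth_take //; apply.
apply/(all_nthP set0) => j'; rewrite size_take_min leq_min => /andP [ltj'j ltj's].
by rewrite nth_take //; apply: avoid.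
Qed.

Lemma cliqueP n d (C : {set {set 'I_n}}) (K : {set 'I_n}) :
  reflect (forall F : {set 'I_n}, F \subset K -> #|F| = d -> F \in C) (clique d C K).
Proof.
apply: (iffP forallP) => [clq F subF cardF | clq F].
  by have := clq F; rewrite subF cardF eqxx.
by apply/implyP => /andP [subF /eqP]; apply: clq.
Qed.

Lemma uniform_complete n d : uniform d (complete_clutter n d).
Proof. by apply/forall_inP => F; rewrite inE. Qed.

Lemma clique_complete n d (K : {set 'I_n}) : clique d (complete_clutter n d) K.
Proof. by apply/cliqueP => F _ /eqP; rewrite inE. Qed.

Definition setmax n (A : {set 'I_n}) : nat := \max_(x in A) val x.

Lemma leq_setmax n (A : {set 'I_n}) x : x \in A -> val x <= setmax A.
Proof. exact: leq_bigmax_cond. Qed.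

Lemma setmax_mem n (A : {set 'I_n}) :
  A != set0 -> exists2 M, M \in A & val M = setmax A.
Proof.
rewrite -card_gt0 => A_gt0; have [M MA maxM] := eq_bigmax_cond (@nat_of_ord n) A_gt0.
by exists M; rewrite // /setmax maxM.
Qed.

Lemma setmax_lt n (A : {set 'I_n}) m :
  0 < m -> (forall x, x \in A -> val x < m) -> setmax A < m.
Proof.
move=> m_gt0 ltAm; rewrite -(prednK m_gt0) ltnS; apply/bigmax_leqP => x xA.
by rewrite -ltnS prednK // ltAm.
Qed.

Lemma ltn_setmax_neq n (A : {set 'I_n}) (M x : 'I_n) :
  val M = setmax A -> x \in A -> x != M -> val x < val M.
Proof.
move=> maxM xA; rewrite ltn_neqAle maxM leq_setmax // andbT -maxM.
by apply: contraNneq => /val_inj ->.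
Qed.

Definition max_order n d : seq {set 'I_n} :=
  sort (fun A B => setmax A <= setmax B)
    (enum [pred A : {set 'I_n} | (#|A| == d.-1) && (setmax A < n.-1)]).

Lemma mem_max_order n d (A : {set 'I_n}) :
  (A \in max_order n d) = (#|A| == d.-1) && (setmax A < n.-1).
Proof. by rewrite mem_sort mem_enum. Qed.

Lemma sorted_max_order n d :
  sorted (fun A B => setmax A <= setmax B) (max_order n d).
Proof. by apply: sort_sorted => A B; apply: leq_total. Qed.

Lemma leq_setmax_nth n d j k : j <= k -> k < size (max_order n d) ->
  setmax (nth set0 (max_order n d) j) <= setmax (nth set0 (max_order n d) k).
Proof.
move=> lejk ltks.
apply: (sorted_leq_nth _ _ _ (sorted_max_order n d));
  rewrite ?inE ?(leq_ltn_trans lejk) //.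
by move=> B A D; apply: leq_trans.
Qed.

Section MaxOrder.
Variables (n d i : nat).
Hypotheses (le2d : 2 <= d) (lt_i_size : i < size (max_order n d)).

Local Notation s := (max_order n d).
Local Notation e := (nth set0 s i).
Local Notation C_i := (cdels (complete_clutter n d) (take i s)).

Lemma setmax_take A : A \in take i s -> setmax A <= setmax e.
Proof.
move=> As; rewrite -(nth_index set0 (mem_take As)) leq_setmax_nth //.
exact/ltnW/index_ltn.
Qed.

Lemma setmax_drop A : A \in s -> A \notin take i s -> setmax e <= setmax A.
Proof.
move=> As; rewrite in_take // -leqNgt => leiA.
by rewrite -(nth_index set0 As) leq_setmax_nth ?index_mem.
Qed.

Lemma nth_notin_take : e \notin take i s.
Proof.
have uniq_s : uniq s by rewrite sort_uniq enum_uniq.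
by rewrite in_take ?mem_nth // index_uniq // ltnn.
Qed.

Lemma card_max_elim : #|e| = d.-1.
Proof. by have := mem_nth set0 lt_i_size; rewrite mem_max_order => /andP [/eqP]. Qed.

Lemma setmax_max_elim : setmax e < n.-1.
Proof. by have := mem_nth set0 lt_i_size; rewrite mem_max_order => /andP []. Qed.

Lemma max_elim_cdels (F : {set 'I_n}) : #|F| = d ->
  (forall x, x \in F -> val x <= setmax e -> x \in e) -> F \in C_i.
Proof.
move=> cardF lowF; rewrite mem_cdels inE cardF eqxx /=.
apply/allP => A Ai; apply: contraNN nth_notin_take => subAF.
have [cardA _] : #|A| = d.-1 /\ setmax A < n.-1.
  by have := mem_take Ai; rewrite mem_max_order => /andP [/eqP].
suff <- : A = e by [].
apply/eqP; rewrite eqEcard cardA card_max_elim leqnn andbT.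
apply/subsetP => x xA; apply: lowF; first exact: subsetP subAF x xA.
exact: leq_trans (leq_setmax xA) (setmax_take Ai).
Qed.

(* If c |: e survives with c below max e, then c |: (e :\ max e) is a
   (d-1)-set of smaller maximum, hence deleted earlier, and it lies in c |: e. *)
Lemma max_elim_nbh c : c \in nbh C_i e -> setmax e < val c.
Proof.
have carde := card_max_elim.
rewrite inE mem_cdels inE => /andP [/eqP cardcE avoid].
have ce : c \notin e.
  by apply: contra_eqN cardcE => ce; rewrite (setUidPr _) ?sub1set // carde; lia.
have [M Me maxM] : exists2 M, M \in e & val M = setmax e.
  by apply: setmax_mem; rewrite -card_gt0 carde; lia.
rewrite ltnNge; apply/negP => le_c_e.
have ltcM : val c < val M.
  rewrite ltn_neqAle maxM le_c_e andbT -maxM; apply: contraNN ce => /eqP /val_inj ->.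
  by rewrite Me.
pose A := c |: (e :\ M).
have cardA : #|A| = d.-1.
  have := cardsD1 M e; rewrite Me carde cardsU1 !inE (negbTE ce) andbF /=; lia.
have lt_A_e : setmax A < setmax e.
  apply: setmax_lt; first by lia.
  move=> x; rewrite -maxM !inE => /orP [/eqP -> //|/andP [xM xe]].
  exact: ltn_setmax_neq maxM xe xM.
have As : A \in s.
  by rewrite mem_max_order cardA eqxx (ltn_trans lt_A_e setmax_max_elim).
have Ai : A \in take i s.
  by apply: contraTT lt_A_e => /(setmax_drop As); rewrite leqNgt.
by move/allP/(_ A Ai): avoid; rewrite setUS // subD1set.
Qed.

Lemma max_order_simplicial : simplicial d C_i e.
Proof.
have carde := card_max_elim; have lt_e_n := setmax_max_elim.
have ltn1n : n.-1 < n by lia.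
pose L : 'I_n := Ordinal ltn1n.
have Le : L \notin e by apply: contraTN lt_e_n => /leq_setmax; rewrite /= -leqNgt.
apply/andP; split.
  rewrite /submaximal carde eqxx; apply/existsP; exists (L |: e).
  rewrite subsetUr andbT; apply: max_elim_cdels.
    by rewrite cardsU1 Le carde; lia.
  by move=> x; rewrite !inE => /orP [/eqP -> /=|//]; lia.
apply/cliqueP => F subF cardF; apply: max_elim_cdels => // x xF le_x_e.
move: (subsetP subF x xF); rewrite inE => /orP [//|/max_elim_nbh]; lia.
Qed.

End MaxOrder.

Lemma cdels_max_order n d :
  2 <= d -> cdels (complete_clutter n d) (max_order n d) = set0.
Proof.
move=> le2d; apply/setP => F; rewrite inE mem_cdels inE.
apply/negP => /andP [/eqP cardF /allP avoid].
have [M MF maxM] : exists2 M, M \in F & val M = setmax F.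
  by apply: setmax_mem; rewrite -card_gt0 cardF; lia.
have cardFM : #|F :\ M| = d.-1 by have := cardsD1 M F; rewrite MF cardF; lia.
have ltFM x : x \in F :\ M -> val x < val M.
  by rewrite !inE => /andP [xM xF]; apply: ltn_setmax_neq maxM xF xM.
have [y yFM] : exists y, y \in F :\ M by apply/set0Pn; rewrite -card_gt0 cardFM; lia.
have : F :\ M \in max_order n d.
  rewrite mem_max_order cardFM eqxx /=.
  have := setmax_lt (leq_ltn_trans (leq0n _) (ltFM y yFM)) ltFM.
  by have := ltn_ord M; rewrite -[nat_of_ord M]/(val M); lia.
by move/avoid; rewrite subD1set.
Qed.

Lemma chordal_complete n d : 2 <= d -> chordal d (complete_clutter n d).
Proof.
move=> le2d; exists (max_order n d); split; last exact: cdels_max_order.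
by move=> i; apply: max_order_simplicial.
Qed.

Section SimplicialOrder.
Variables (n d : nat) (C : {set {set 'I_n}}) (s : seq {set 'I_n}).
Hypotheses (d_gt0 : 0 < d) (C_unif : uniform d C)
           (s_simp : simplicial_order d C s).

Local Notation e j := (nth set0 s j).
Local Notation C_ j := (cdels C (take j s)).
Local Notation N j := (nbh (C_ j) (e j)).

Lemma card_cdels j (F : {set 'I_n}) : F \in C_ j -> #|F| = d.
Proof. by case/cdels_take_nthP => /(forall_inP C_unif) /eqP. Qed.

Lemma card_elim j : j < size s -> #|e j| = d.-1.
Proof. by case: s_simp => simp _ /simp /andP [/andP [/eqP]]. Qed.

Lemma elim_cover (F : {set 'I_n}) : F \in C -> exists2 j, j < size s & e j \subset F.
Proof.
case: s_simp => _ C_s0 FC; have : F \notin cdels C s by rewrite C_s0 inE.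
rewrite mem_cdels FC /= => /allPn [e' e's /negbNE e'F].
by exists (index e' s); rewrite ?index_mem ?nth_index.
Qed.

Lemma nbh_elim_disjoint j (c : 'I_n) : j < size s -> c \in N j -> c \notin e j.
Proof.
rewrite inE => ltjs /card_cdels; apply: contra_eqN => ce.
by rewrite (setUidPr _) ?sub1set // card_elim // ltn_eqF // ltn_predL.
Qed.

Lemma cnbh_clique j (F : {set 'I_n}) :
  j < size s -> F \subset e j :|: N j -> #|F| = d -> F \in C_ j.
Proof.
by case: s_simp => simp _ /simp /andP [_ /cliqueP]; apply.
Qed.

Lemma nbh_elim_gt0 j : j < size s -> 0 < #|N j|.
Proof.
move=> ltjs; case: s_simp => simp _.
have /andP [/andP [_ /existsP [F /andP [FC eF]]] _] := simp j ltjs.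
have : 0 < #|F :\: e j|.
  by rewrite cardsDS // card_elim // (card_cdels FC) subn_gt0 ltn_predL.
case/card_gt0P => c; rewrite inE => /andP [ce cF].
apply/card_gt0P; exists c; rewrite inE.
suff -> : c |: e j = F by [].
apply/eqP; rewrite eqEcard subUset sub1set cF eF /=.
by rewrite cardsU1 ce card_elim // (card_cdels FC) add1n prednK.
Qed.

Lemma disjoint_nbh_elim j (S : {set 'I_n}) :
  j < size s -> S \subset N j -> [disjoint S & e j].
Proof.
move=> ltjs sub; apply/pred0P => c /=; apply/negbTE/andP => -[cS].
exact/negP/(nbh_elim_disjoint ltjs)/(subsetP sub).
Qed.

Let extensions k :=
  [set p : 'I_(size s) * {set 'I_n} | (p.2 \subset N p.1) && (#|p.2| == k)].
Let extend (p : 'I_(size s) * {set 'I_n}) := e p.1 :|: p.2.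

Lemma card_extensions k : #|extensions k| = \sum_(j < size s) 'C(#|N j|, k).
Proof.
rewrite -sum1_card (eq_bigr (fun j : 'I_(size s) =>
  \sum_(S : {set 'I_n} | (S \subset N j) && (#|S| == k)) 1)).
  by rewrite pair_big_dep; apply: eq_bigl => p; rewrite inE.
by move=> j _; rewrite -cards_draws -sum1_card; apply: eq_bigl => S; rewrite inE.
Qed.

(* An element x of S lies in N j, so x |: e j is a d-subset of e j' :|: N j'
   and survives to stage j', although it contains the deleted e j. *)
Lemma extension_stage_leq j j' (S S' : {set 'I_n}) : j' < size s ->
  S \subset N j -> S != set0 -> S' \subset N j' ->
  e j :|: S = e j' :|: S' -> j' <= j.
Proof.
move=> ltj's subS /set0Pn [x xS] subS' eqT; rewrite leqNgt; apply/negP => ltjj'.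
have xN := subsetP subS x xS.
have : x |: e j \in C_ j'.
  apply: cnbh_clique => //; last by move: xN; rewrite inE => /card_cdels.
  apply: subset_trans (setUS _ subS'); rewrite -eqT subUset subsetUl sub1set.
  by rewrite inE xS orbT.
case/cdels_take_nthP => _ /(_ j ltjj' (ltn_trans ltjj' ltj's)).
by rewrite subsetUr.
Qed.

Lemma extend_inj k : 0 < k -> {in extensions k &, injective extend}.
Proof.
move=> k_gt0 [j S] [j' S']; rewrite !inE /extend /=.
move=> /andP [subS /eqP cardS] /andP [subS' /eqP cardS'] eqT.
have S_neq0 (A : {set 'I_n}) : #|A| = k -> A != set0.
  by move=> cardA; rewrite -card_gt0 cardA.
have eq_jj' : j = j'.
  apply/val_inj/eqP; rewrite eqn_leq.
  rewrite (extension_stage_leq _ _ _ _ eqT) ?S_neq0 //=.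
  by rewrite (extension_stage_leq _ _ _ _ (esym eqT)) ?S_neq0.
case: j' / eq_jj' subS' eqT => subS' eqT; congr pair.
rewrite -(setDidPl (disjoint_nbh_elim (ltn_ord j) subS)).
rewrite -(setDidPl (disjoint_nbh_elim (ltn_ord j) subS')).
by have := congr1 (fun T => T :\: e j) eqT; rewrite /= !setDUl setDv !set0U.
Qed.

Lemma card_extend j (S : {set 'I_n}) :
  j < size s -> S \subset N j -> #|e j :|: S| = d.-1 + #|S|.
Proof.
move=> ltjs sub; rewrite cardsU setIC disjoint_setI0 ?disjoint_nbh_elim //.
by rewrite cards0 subn0 card_elim.
Qed.

Lemma extend_image k : 0 < k ->
  extend @: extensions k = [set T | clique d C T & #|T| == d.-1 + k].
Proof.
move=> k_gt0; apply/setP => T; rewrite inE; apply/imsetP/andP.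
  case=> -[j S]; rewrite inE /extend /= => /andP [sub /eqP cardS] ->.
  rewrite card_extend // cardS eqxx; split=> //; apply/cliqueP => F subF cardF.
  have := cnbh_clique (ltn_ord j) (subset_trans subF (setUS _ sub)) cardF.
  by case/cdels_take_nthP.
case=> /cliqueP clqT /eqP cardT.
have [F subFT cardF] : exists2 F : {set 'I_n}, F \subset T & #|F| = d.
  by apply: exists_subset_card; rewrite cardT -{1}(prednK d_gt0) -addn1 leq_add2l.
have exj : exists j, (j < size s) && (e j \subset T).
  have [j ltjs sub] := elim_cover (clqT F subFT cardF).
  by exists j; rewrite ltjs (subset_trans sub).
case: (ex_minnP exj) => j /andP [ltjs subT] minj.
exists (Ordinal ltjs, T :\: e j); last first.
  by rewrite /extend /= -[LHS](setID T (e j)) (setIidPr subT).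
rewrite inE /= cardsDS // cardT card_elim // addKn eqxx andbT.
apply/subsetP => x; rewrite !inE => /andP [xe xT].
have subxT : x |: e j \subset T by rewrite subUset sub1set xT.
apply/cdels_take_nthP; split.
  by apply: clqT => //; rewrite cardsU1 xe card_elim // add1n prednK.
move=> j' ltj'j ltj's; apply: contraTN ltj'j => sub.
by rewrite -leqNgt minj // ltj's (subset_trans sub).
Qed.

Lemma sum_bin_nbh k : 0 < k ->
  \sum_(j < size s) 'C(#|N j|, k) = #|[set T | clique d C T & #|T| == d.-1 + k]|.
Proof.
move=> k_gt0; rewrite -(extend_image k_gt0) card_in_imset ?card_extensions //.
exact: extend_inj.
Qed.

Lemma lambda_of0 : lambda_of C s 0 = 0.
Proof.
apply/eqP; rewrite -leqn0 /lambda_of -sum1_count big1_seq //.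
move=> j /andP [/eqP Nj0]; rewrite mem_iota add0n => /nbh_elim_gt0.
by rewrite /order_N in Nj0; rewrite Nj0.
Qed.

End SimplicialOrder.

Lemma order_N_le n (C : {set {set 'I_n}}) s j : order_N C s j <= n.
Proof. by rewrite -[leqRHS]card_ord max_card. Qed.

Lemma lambda_of_gt n (C : {set {set 'I_n}}) s i : n < i -> lambda_of C s i = 0.
Proof.
move=> ltni; apply/eqP; rewrite -leqn0 /lambda_of -sum1_count big1 // => j /eqP Nj.
by move: (order_N_le C s j); rewrite Nj leqNgt ltni.
Qed.

Lemma sum_lambda_of_bin n (C : {set {set 'I_n}}) s k :
  \sum_(i < n.+1) lambda_of C s i * 'C(i, k) =
  \sum_(j < size s) 'C(order_N C s j, k).
Proof.
rewrite (eq_bigr (fun i : 'I_n.+1 => \sum_(j < size s)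
  (order_N C s j == i) * 'C(order_N C s j, k))); last first.
  move=> i _; rewrite /lambda_of -sum1_count big_distrl /= big_mkcond /=.
  rewrite -{1}(subn0 (size s)) -/(index_iota 0 _) big_mkord; apply: eq_bigr => j _.
  by case: eqP => [->|]; rewrite ?mul1n.
rewrite exchange_big /=; apply: eq_bigr => j _.
have ltNn : order_N C s j < n.+1 by rewrite ltnS order_N_le.
rewrite (bigD1 (Ordinal ltNn)) //= eqxx mul1n big1 ?addn0 // => i neq_iN.
by case: eqP => // eq_Ni; move: neq_iN; rewrite -val_eqE /= eq_Ni eqxx.
Qed.

Lemma sum_lambda_of_complete_bin n d s k :
  0 < d -> simplicial_order d (complete_clutter n d) s -> 0 < k ->
  \sum_(i < n.+1) lambda_of (complete_clutter n d) s i * 'C(i, k) =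
  'C(n, d.-1 + k).
Proof.
move=> d_gt0 s_simp k_gt0; rewrite sum_lambda_of_bin.
rewrite (sum_bin_nbh d_gt0 (uniform_complete n d) s_simp k_gt0).
rewrite -[in RHS](card_ord n) -card_draws; apply: eq_card => T.
by rewrite !inE clique_complete.
Qed.

Definition complete_lambda n d i :=
  if (1 <= i) && (i <= n - d + 1) then 'C(n - 1 - i, d - 2) else 0.

Lemma sum_complete_lambda_bin n d k : 2 <= d -> d <= n -> 0 < k ->
  \sum_(i < n.+1) complete_lambda n d i * 'C(i, k) = 'C(n, d.-1 + k).
Proof.
move=> le2d ledn k_gt0; have [m def_n] : exists m, n = m.+1 by exists n.-1; lia.
rewrite big_ord_recr /= {2}/complete_lambda ifN ?mul0n ?addn0; last first.
  by apply/nandP; right; rewrite -ltnNge; lia.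
rewrite (eq_bigr (fun i : 'I_n => 'C(m - i, d - 2) * 'C(i, k))).
  by rewrite def_n Vandermonde_upper; congr 'C(_, _); lia.
move=> i _; rewrite /complete_lambda.
case: ifP => [/andP [_ lei]|/negbT /nandP [|ltni]].
- by congr (_ * _); congr 'C(_, _); lia.
- by rewrite -eqn0Ngt => /eqP ->; rewrite bin0n eqn0Ngt k_gt0 !muln0.
- by rewrite (@bin_small (m - i)) ?mul0n //; have := ltn_ord i; lia.
Qed.

Lemma lambda_of_complete n d s i : 2 <= d -> d <= n ->
  simplicial_order d (complete_clutter n d) s ->
  lambda_of (complete_clutter n d) s i = complete_lambda n d i.
Proof.
move=> le2d ledn s_simp; have d_gt0 : 0 < d by apply: leq_trans le2d.
case: (posnP i) => [->|].
  by rewrite (lambda_of0 d_gt0 (uniform_complete n d) s_simp).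
apply: (eq_from_binomial_moments (M := n)) => [{}i ltni|k k_gt0].
  by rewrite lambda_of_gt // /complete_lambda ifN //; apply/nandP; right; lia.
by rewrite sum_lambda_of_complete_bin // sum_complete_lambda_bin.
Qed.

Theorem proposition4p7 (n d : nat) (hd : 2 <= d) (hnd : d <= n) :
  chordal d (complete_clutter n d) /\
  (forall s, simplicial_order d (complete_clutter n d) s ->
   forall i : nat,
     lambda_of (complete_clutter n d) s i =
       (if (1 <= i) && (i <= n - d + 1) then 'C(n - 1 - i, d - 2) else 0)).
Proof.
split; first exact: chordal_complete.
by move=> s s_simp i; rewrite (lambda_of_complete i hd hnd s_simp).
Qed.
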